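(* Let $\mathbb{K}$ be an algebraically closed field, let $Z=m_1p_1+\cdots+m_sp_s\subseteq\mathbb{P}^N_{\mathbb{K}}$ be a nonzero fat point subscheme, and let $I=I(Z)$. Let $m,r$ be positive integers. If $$m\geq \max\left(\frac{\operatorname{satdeg}(I^r)}{\widehat{\alpha}(I(Z))},\,r\right),$$ then $I^{(m)}\subseteq I^r$.
   Context: $p_1,\ldots,p_s$ are distinct points, $m_i$ nonnegative integers not all zero. $R=\mathbb{K}[x_0,\ldots,x_N]$; $I(p)$ is the ideal of forms vanishing at $p$; $I(Z)=\bigcap_i I(p_i)^{m_i}$; the $m$th symbolic power is $I^{(m)}=I(mZ)=\bigcap_i I(p_i)^{mm_i}$. For a homogeneous ideal $J$, $[J]_t$ is its degree-$t$ homogeneous component and $\alpha(J)$ the least $t$ with $[J]_t\neq0$; $\widehat{\alpha}(I(Z))=\inf_{m>0}\alpha(I(mZ))/m$. The saturation degree $\operatorname{satdeg}(I^r)$ is the least $t$ such that $[I^r]_j=[I^{(r)}]_j$ for all $j\geq t$. *)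

From Stdlib Require Import Reals ClassicalEpsilon.
From Coquelicot Require Import Rbar Lub.
From HB Require Import structures.
From mathcomp Require Import all_boot all_order all_algebra.
From mathcomp Require Import mpoly.

Set Implicit Arguments.
Unset Strict Implicit.
Unset Printing Implicit Defensive.

Import GRing.Theory.
Local Open Scope ring_scope.

Section FatPoints.
Variables (K : closedFieldType) (N : nat).

Local Notation R := {mpoly K[N.+1]}.

Definition pset := R -> Prop.

(* f is a form (homogeneous polynomial) of degree t (0 is a form of every degree) *)
Definition is_form (t : nat) (f : R) : Prop :=
  all (fun m => mdeg m == t) (msupp f).

Definition gen_ideal (S : pset) : pset := fun f =>
  exists gs : seq (R * R),
    (forall gh, gh \in gs -> S gh.2) /\ f = \sum_(gh <- gs) gh.1 * gh.2.

Definition ideal_mul (A B : pset) : pset :=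
  gen_ideal (fun h => exists a b, A a /\ B b /\ h = a * b).

Fixpoint ideal_pow (J : pset) (k : nat) : pset :=
  match k with
  | 0%N => fun _ => True
  | k'.+1 => ideal_mul (ideal_pow J k') J
  end.

(* a point of P^N given by homogeneous coordinates *)
Definition coords := 'I_N.+1 -> K.

Definition Ipt (p : coords) : pset :=
  gen_ideal (fun h => exists t, is_form t h /\ h.@[p] = 0).

(* I(Z) = \bigcap_i I(p_i)^{m_i} for Z = m_1 p_1 + ... + m_s p_s *)
Definition IZ (s : nat) (p : 'I_s -> coords) (mult : 'I_s -> nat) : pset :=
  fun f => forall i, ideal_pow (Ipt (p i)) (mult i) f.

(* m-th symbolic power I^{(m)} = I(mZ) *)
Definition symb_pow (s : nat) (p : 'I_s -> coords) (mult : 'I_s -> nat)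
  (m : nat) : pset :=
  IZ p (fun i => (m * mult i)%N).

Definition comp_nonzero (J : pset) (t : nat) : Prop :=
  exists f, J f /\ is_form t f /\ f != 0.

Definition decP (P : Prop) : bool :=
  if excluded_middle_informative P then true else false.

(* alpha(J) = least t with [J]_t <> 0 (0 by convention if there is none) *)
Definition alpha (J : pset) : nat :=
  match excluded_middle_informative (exists t, comp_nonzero J t) with
  | left ex => ex_minn (P := fun t => decP (comp_nonzero J t))
                 (let: ex_intro t Ht := ex in
                  ex_intro _ t (match excluded_middle_informative
                                   (comp_nonzero J t) as b
                                   return ((if b then true else false) = true)
                                with left _ => erefl | right nH => False_ind _ (nH Ht) end))
  | right _ => 0%N
  end.

Definition alphahat (s : nat) (p : 'I_s -> coords) (mult : 'I_s -> nat) : Rdefinitions.R :=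
  real (Glb_Rbar (fun x => exists m : nat, (0 < m)%N /\
          x = Rdefinitions.Rdiv (INR (alpha (symb_pow p mult m))) (INR m))).

Definition same_comp (A B : pset) (j : nat) : Prop :=
  forall f, is_form j f -> (A f <-> B f).

(* satdeg(I^r) = least t with [I^r]_j = [I^{(r)}]_j for all j >= t
   (0 by convention if there is none) *)
Definition satdeg (s : nat) (p : 'I_s -> coords) (mult : 'I_s -> nat) (r : nat) : nat :=
  let P t := forall j, (t <= j)%N ->
               same_comp (ideal_pow (IZ p mult) r) (symb_pow p mult r) j in
  match excluded_middle_informative (exists t, P t) with
  | left ex => ex_minn (P := fun t => decP (P t))
                 (let: ex_intro t Ht := ex in
                  ex_intro _ t (match excluded_middle_informative (P t) as b
                                   return ((if b then true else false) = true)
                                with left _ => erefl | right nH => False_ind _ (nH Ht) end))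
  | right _ => 0%N
  end.

End FatPoints.

(* Write [I(q)^n] as the ideal generated by products of [n] linear forms vanishing at [q].
   After a linear change of coordinates moving [q] to a coordinate point [e_k], membership
   in [I(q)^n] becomes a condition on monomials; this shows that [I(q)^n] is saturated with
   respect to a linear form [ell] with [ell(q) = 1], and that every form is congruent modulo
   [I(q)^n] to a multiple of a large power of [ell].  Adding the points one at a time, and
   using a product of linear forms through the previous points that does not vanish at the
   new one, [\bigcap_i I(p_i)^(n_i)] and [\prod_i I(p_i)^(n_i)] agree in large degree; hence
   so do [I^r] and [I^(r)], and [satdeg(I^r)] is a genuine saturation degree.  Finally, every
   homogeneous component of [f] in [I^(m)] has degree at least
   [alpha(I^(m)) >= m * alphahat(I) >= satdeg(I^r)] and lies in [I^(r)] because [m >= r],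
   hence in [I^r]. *)

From Pilot Require Import Defs.
From Stdlib Require Import Reals Lra ClassicalEpsilon.
From Coquelicot Require Import Rbar Lub.
From HB Require Import structures.
From mathcomp Require Import all_boot all_order all_algebra.
From mathcomp Require Import mpoly zify ring.

Set Implicit Arguments.
Unset Strict Implicit.
Unset Printing Implicit Defensive.
Import GRing.Theory.
Local Open Scope ring_scope.

Section GeneratedIdeals.
Variables (K : closedFieldType) (N : nat).
Local Notation R := {mpoly K[N.+1]}.
Local Notation gen := (@gen_ideal K N).
Implicit Types (S T U J : pset K N) (f g h : R).

Lemma gen_ideal0 S : gen S 0.
Proof. by exists [::]; rewrite big_nil. Qed.

Lemma mem_gen_ideal S h : S h -> gen S h.
Proof.
move=> Sh; exists [:: (1, h)]; split; last by rewrite big_seq1 mul1r.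
by move=> gh; rewrite inE => /eqP ->.
Qed.

Lemma gen_idealD S f g : gen S f -> gen S g -> gen S (f + g).
Proof.
move=> [gs [Hgs ->]] [hs [Hhs ->]]; exists (gs ++ hs); split; last by rewrite big_cat.
by move=> gh; rewrite mem_cat => /orP[/Hgs|/Hhs].
Qed.

Lemma gen_idealMl S a f : gen S f -> gen S (a * f).
Proof.
move=> [gs [Hgs ->]]; exists [seq (a * gh.1, gh.2) | gh <- gs]; split.
  by move=> gh /mapP[x /Hgs Hx ->].
by rewrite big_map mulr_sumr; apply: eq_bigr => x _; rewrite mulrA.
Qed.

Lemma gen_idealMr S a f : gen S f -> gen S (f * a).
Proof. by rewrite mulrC; apply: gen_idealMl. Qed.

Lemma gen_idealZ S c f : gen S f -> gen S (c *: f).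
Proof. by rewrite -mul_mpolyC; apply: gen_idealMl. Qed.

Lemma gen_idealB S f g : gen S f -> gen S g -> gen S (f - g).
Proof. by move=> Sf Sg; apply: gen_idealD => //; rewrite -scaleN1r; apply: gen_idealZ. Qed.

Lemma gen_ideal_sum S (I : eqType) (r : seq I) (F : I -> R) :
  (forall i, i \in r -> gen S (F i)) -> gen S (\sum_(i <- r) F i).
Proof.
elim: r => [|x r IH] SF; first by rewrite big_nil; apply: gen_ideal0.
rewrite big_cons; apply: gen_idealD; first by apply: SF; rewrite mem_head.
by apply: IH => i ri; apply: SF; rewrite inE ri orbT.
Qed.

Lemma gen_ideal_trans S T f : (forall h, S h -> gen T h) -> gen S f -> gen T f.
Proof. by move=> ST [gs [Hgs ->]]; apply: gen_ideal_sum => gh /Hgs /ST; apply: gen_idealMl. Qed.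

Lemma gen_ideal_mono S T f : (forall h, S h -> T h) -> gen S f -> gen T f.
Proof. by move=> ST; apply: gen_ideal_trans => h /ST; apply: mem_gen_ideal. Qed.

Lemma gen_idealM S T U f g :
  (forall a b, S a -> T b -> gen U (a * b)) -> gen S f -> gen T g -> gen U (f * g).
Proof.
move=> STU [gs [Hgs ->]] [hs [Hhs ->]].
rewrite mulr_suml; apply: gen_ideal_sum => x /Hgs Sx.
rewrite mulr_sumr; apply: gen_ideal_sum => y /Hhs Ty.
by rewrite mulrACA; apply: gen_idealMl; apply: STU.
Qed.

Lemma ideal_pow_gen J k f : gen (ideal_pow J k) f -> ideal_pow J k f.
Proof. by case: k => [//|k]; apply: gen_ideal_trans. Qed.

Lemma ideal_pow0 J k : ideal_pow J k 0.
Proof. exact/ideal_pow_gen/gen_ideal0. Qed.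

Lemma ideal_pow_sum J k (I : eqType) (r : seq I) (F : I -> R) :
  (forall i, i \in r -> ideal_pow J k (F i)) -> ideal_pow J k (\sum_(i <- r) F i).
Proof. by move=> JF; apply/ideal_pow_gen/gen_ideal_sum => i /JF /mem_gen_ideal. Qed.

Lemma ideal_pow_prod J (zs : seq R) :
  (forall y, y \in zs -> J y) -> ideal_pow J (size zs) (\prod_(y <- zs) y).
Proof.
elim: zs => [|y zs IH] Jzs //=; rewrite big_cons mulrC; apply: mem_gen_ideal.
exists (\prod_(z <- zs) z), y; split.
  by apply: IH => z zs_z; apply: Jzs; rewrite inE zs_z orbT.
by split=> //; apply: Jzs; rewrite mem_head.
Qed.

End GeneratedIdeals.

Section LinearProducts.
Variables (K : closedFieldType) (N : nat).
Local Notation R := {mpoly K[N.+1]}.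
Local Notation gen := (@gen_ideal K N).
Implicit Types (q : coords K N) (f h v : R).

Lemma is_formP t f : is_form t f <-> f \is t.-homog.
Proof. by rewrite /is_form dhomogE. Qed.

Lemma is_formX i : is_form 1 ('X_i : R).
Proof. by apply/is_formP; rewrite dhomogX; apply/eqP; apply: mdeg1. Qed.

Definition vanishing_linear q v := is_form 1 v /\ v.@[q] = 0.

(* [gen_ideal (linprod q n)] is [I(q)^n], see [ideal_pow_IptE]. *)
Definition linprod q n h := exists vs : seq R,
  [/\ size vs = n, forall v, v \in vs -> vanishing_linear q v & h = \prod_(v <- vs) v].

Lemma linprod0 q : linprod q 0 1.
Proof. by exists [::]; rewrite big_nil. Qed.

Lemma linprod1 q v : vanishing_linear q v -> linprod q 1 v.
Proof.
move=> Lv; exists [:: v]; split=> //; last by rewrite big_seq1.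
by move=> w; rewrite inE => /eqP ->.
Qed.

Lemma linprodM q a b x y : linprod q a x -> linprod q b y -> linprod q (a + b) (x * y).
Proof.
move=> [vs [<- Hvs ->]] [ws [<- Hws ->]]; exists (vs ++ ws).
split; [by rewrite size_cat | | by rewrite big_cat].
by move=> v; rewrite mem_cat => /orP[/Hvs|/Hws].
Qed.

Lemma linprod_split q a b z :
  linprod q (a + b) z -> exists x y, [/\ linprod q a x, linprod q b y & z = x * y].
Proof.
move=> [vs [size_vs Hvs ->]].
exists (\prod_(v <- take a vs) v), (\prod_(v <- drop a vs) v).
split; last by rewrite -big_cat cat_take_drop.
- exists (take a vs); split=> // [|v /mem_take /Hvs//].
  by rewrite size_take size_vs; case: ltnP; lia.
- by exists (drop a vs); split=> // [|v /mem_drop /Hvs//]; rewrite size_drop size_vs addKn.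
Qed.

Lemma linprodX q v e : vanishing_linear q v -> linprod q e (v ^+ e).
Proof.
move=> Lv; elim: e => [|e IH]; first by rewrite expr0; apply: linprod0.
by rewrite exprS mulrC -addn1; apply: linprodM => //; apply: linprod1.
Qed.

Lemma linprod_form q n h : linprod q n h -> is_form n h.
Proof.
move=> [vs [<- Hvs ->]]; apply/is_formP; elim: vs Hvs => [|v vs IH] Hvs.
  by rewrite big_nil; apply: dhomog1.
rewrite big_cons /= -[(size vs).+1]add1n; apply: dhomogM.
  by apply/is_formP; case: (Hvs v (mem_head _ _)).
by apply: IH => w vs_w; apply: Hvs; rewrite inE vs_w orbT.
Qed.

Lemma linprod_blocks q r m z : linprod q (r * m) z ->
  exists zs : seq R, [/\ size zs = r, forall y, y \in zs -> linprod q m y & z = \prod_(y <- zs) y].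
Proof.
elim: r z => [|r IH] z.
  by rewrite mul0n => -[vs [/size0nil -> _ ->]]; exists [::]; rewrite !big_nil.
rewrite mulSn => /linprod_split [x [y [Hx /IH [zs [size_zs Hzs ->]] ->]]].
exists (x :: zs); split; [by rewrite /= size_zs | | by rewrite big_cons].
by move=> w; rewrite inE => /orP [/eqP ->|/Hzs].
Qed.

Lemma gen_linprodM q a b f g :
  gen (linprod q a) f -> gen (linprod q b) g -> gen (linprod q (a + b)) (f * g).
Proof. by apply: gen_idealM => x y Hx Hy; apply/mem_gen_ideal/linprodM. Qed.

Lemma gen_linprod0 q f : gen (linprod q 0) f.
Proof. by rewrite -[f]mulr1; apply/gen_idealMl/mem_gen_ideal/linprod0. Qed.

Lemma gen_linprod_le q a b f : (b <= a)%N -> gen (linprod q a) f -> gen (linprod q b) f.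
Proof.
move=> le_ba; apply: gen_ideal_trans => h.
by rewrite -(subnKC le_ba) => /linprod_split [x [y [Hx _ ->]]]; apply/gen_idealMr/mem_gen_ideal.
Qed.

Lemma gen_linprodX q a e f : gen (linprod q a) f -> gen (linprod q (a * e)) (f ^+ e).
Proof.
move=> Hf; elim: e => [|e IH]; first by rewrite muln0; apply: gen_linprod0.
by rewrite exprS mulnS; apply: gen_linprodM.
Qed.

Lemma is_form_prod_linear (lq : N.+1.-tuple R) (m : 'X_{1..N.+1}) :
  (forall i, is_form 1 (tnth lq i)) -> is_form (mdeg m) (\prod_(i < N.+1) tnth lq i ^+ m i).
Proof.
move=> lq_lin; rewrite mdegE; apply/is_formP.
elim/big_ind2: _ => [|a x b y|i _]; [exact: dhomog1 | exact: dhomogM |].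
by have := dhomogMn (m i) (iffLR (is_formP _ _) (lq_lin i)); rewrite mul1n.
Qed.

Lemma is_form_comp_linear (lq : N.+1.-tuple R) d g :
  (forall i, is_form 1 (tnth lq i)) -> is_form d g -> is_form d (g \mPo lq).
Proof.
move=> lq_lin /is_formP/dhomogP g_d; apply/is_formP; rewrite comp_mpolyE big_seq.
apply: rpred_sum => m g_m; apply: rpredZ; rewrite -(g_d m g_m).
exact/is_formP/is_form_prod_linear.
Qed.

End LinearProducts.

Section CoordinatePointOrder.
Variables (K : closedFieldType) (n : nat) (k : 'I_n).
Local Notation R := {mpoly K[n]}.
Implicit Types (f g : R) (m : 'X_{1..n}).

Lemma comp_mpoly_cancel (lq lq' : n.-tuple R) g :
  (forall i, tnth lq i \mPo lq' = 'X_i) -> (g \mPo lq) \mPo lq' = g.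
Proof.
move=> lqK; rewrite [g \mPo lq]comp_mpolyEX raddf_sum /= {3}[g]mpolyE; apply: eq_bigr => m _.
rewrite comp_mpolyZ comp_mpolyX rmorph_prod /= mpolyXE_id; congr (_ *: _).
by apply: eq_bigr => i _; rewrite rmorphXn /= lqK.
Qed.

Lemma comp_mpolyX_tnth (lq : n.-tuple R) i : 'X_i \mPo lq = tnth lq i.
Proof. by rewrite comp_mpolyXU -tnth_nth. Qed.

Lemma mdeg_split m : mdeg m = (m k + \sum_(i | i != k) m i)%N.
Proof. by rewrite mdegE (bigD1 k). Qed.

Lemma mnm_le_mdeg m : (m k <= mdeg m)%N.
Proof. by rewrite mdeg_split leq_addr. Qed.

Lemma mnm_single m : m k = mdeg m -> m = (U_(k) *+ m k)%MM.
Proof.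
move=> mk; apply/mnmP => i; rewrite mulmnE mnm1E.
have [<-|ne] := eqVneq k i; first by rewrite mul1n.
by move: mk; rewrite mdeg_split (bigD1 i) 1?eq_sym //=; lia.
Qed.

(* [g] lies in the [d]-th power of the ideal of the coordinate point [e_k]. *)
Definition ek_order_ge d g := forall m, m \in msupp g -> (d + m k <= mdeg m)%N.

Lemma ek_order_ge0 g : ek_order_ge 0 g.
Proof. by move=> m _; rewrite add0n mnm_le_mdeg. Qed.

Lemma ek_orderD d f g : ek_order_ge d f -> ek_order_ge d g -> ek_order_ge d (f + g).
Proof. by move=> Hf Hg m /msuppD_le; rewrite mem_cat => /orP[/Hf|/Hg]. Qed.

Lemma ek_orderM a b f g : ek_order_ge a f -> ek_order_ge b g -> ek_order_ge (a + b) (f * g).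
Proof.
move=> Hf Hg m /msuppM_le /allpairsP [[m1 m2] /= [/Hf h1 /Hg h2 ->]].
rewrite mdegD mnmDE; lia.
Qed.

Lemma ek_orderMl d f g : ek_order_ge d g -> ek_order_ge d (f * g).
Proof. by rewrite -[d]add0n; apply: ek_orderM; apply: ek_order_ge0. Qed.

Lemma ek_orderZ d c f : ek_order_ge d f -> ek_order_ge d (c *: f).
Proof. by rewrite -mul_mpolyC; apply: ek_orderMl. Qed.

Lemma ek_order_sum d (I : eqType) (r : seq I) (F : I -> R) :
  (forall i, i \in r -> ek_order_ge d (F i)) -> ek_order_ge d (\sum_(i <- r) F i).
Proof.
elim: r => [|x r IH] HF; first by rewrite big_nil => m; rewrite msupp0.
rewrite big_cons; apply: ek_orderD; first by apply: HF; rewrite mem_head.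
by apply: IH => i ri; apply: HF; rewrite inE ri orbT.
Qed.

Lemma ek_order_cancelX d e g : ek_order_ge d ('X_k ^+ e * g) -> ek_order_ge d g.
Proof.
move=> Hg m g_m; have := Hg (U_(k) *+ e + m)%MM.
rewrite mpolyXn mulrC mcoeff_msupp mcoeffMX -mcoeff_msupp => /(_ g_m).
rewrite mdegD mdegMn mdeg1 mnmDE mulmnE mnm1E eqxx; lia.
Qed.

Definition coord_pt : 'I_n -> K := fun i => (i == k)%:R.

Lemma coord_pt_monomial m :
  \prod_(i < n) coord_pt i ^+ m i = if m k == mdeg m then 1 else 0.
Proof.
have [mk|mk] := eqVneq (m k) (mdeg m).
  rewrite big1 // => i _; rewrite /coord_pt; have [->|ne] := eqVneq i k; first by rewrite expr1n.
  by rewrite (mnm_single mk) mulmnE mnm1E eq_sym (negbTE ne) mul0n expr0.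
have [i /andP [ne mi_gt0]] : exists i, (i != k) && (0 < m i)%N.
  apply/existsP; apply: contraNT mk => /existsPn mi0; apply/eqP.
  by rewrite mdeg_split big1 ?addn0 // => i ne; have := mi0 i; rewrite ne /=; lia.
by rewrite (bigD1 i) //= /coord_pt (negbTE ne) expr0n eqn0Ngt mi_gt0 mul0r.
Qed.

Lemma ek_order_vanishing_form d h :
  h \is d.-homog -> h.@[coord_pt] = 0 -> ek_order_ge 1 h.
Proof.
move=> /dhomogP hd; rewrite mevalE => h_ek m h_m; rewrite add1n ltnNge; apply/negP => le_mk.
have mk : m k = mdeg m by apply/eqP; rewrite eqn_leq le_mk mnm_le_mdeg.
move: h_ek; rewrite (bigD1_seq m) ?msupp_uniq //= coord_pt_monomial mk eqxx mulr1.
rewrite big1_seq ?addr0 => [hm0|m' /andP [ne h_m']].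
  by move: h_m; rewrite mcoeff_msupp hm0 eqxx.
rewrite coord_pt_monomial; case: eqP => [m'k|]; last by rewrite mulr0.
by move: ne; rewrite (mnm_single m'k) (mnm_single mk) m'k mk !hd // eqxx.
Qed.

End CoordinatePointOrder.

Section Recentering.
Variables (K : closedFieldType) (N : nat) (q : coords K N) (k : 'I_N.+1).
Hypothesis qk_neq0 : q k != 0.
Local Notation R := {mpoly K[N.+1]}.
Local Notation gen := (@gen_ideal K N).
Implicit Types (f g h : R).

(* [recenter g] is [g \o sigma] for the linear automorphism [sigma] with [sigma e_k = q];
   [ell] is the linear form with [recenter ell = x_k]. *)
Definition recenter_t : N.+1.-tuple R :=
  [tuple (if i == k then q k *: 'X_k else 'X_i + q i *: 'X_k) | i < N.+1].
Definition recenter_inv_t : N.+1.-tuple R :=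
  [tuple (if i == k then (q k)^-1 *: 'X_k else 'X_i - (q i / q k) *: 'X_k) | i < N.+1].
Definition recenter g := g \mPo recenter_t.
Definition recenter_inv g := g \mPo recenter_inv_t.
Definition ell : R := (q k)^-1 *: 'X_k.

Lemma tnth_recenter_t i :
  tnth recenter_t i = if i == k then q k *: 'X_k else 'X_i + q i *: 'X_k.
Proof. by rewrite tnth_mktuple. Qed.

Lemma tnth_recenter_inv_t i :
  tnth recenter_inv_t i = if i == k then (q k)^-1 *: 'X_k else 'X_i - (q i / q k) *: 'X_k.
Proof. by rewrite tnth_mktuple. Qed.

Lemma recenterK g : recenter_inv (recenter g) = g.
Proof.
apply: comp_mpoly_cancel => i; rewrite tnth_recenter_t.
have [->|ne] := eqVneq i k.
  by rewrite comp_mpolyZ comp_mpolyX_tnth tnth_recenter_inv_t eqxx scalerA mulfV // scale1r.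
rewrite comp_mpolyD comp_mpolyZ !comp_mpolyX_tnth !tnth_recenter_inv_t eqxx (negbTE ne).
by rewrite scalerA mulrC subrK.
Qed.

Lemma recenter_ell : recenter ell = 'X_k.
Proof.
rewrite /recenter /ell comp_mpolyZ comp_mpolyX_tnth tnth_recenter_t eqxx.
by rewrite scalerA mulVf // scale1r.
Qed.

Lemma meval_ell : ell.@[q] = 1.
Proof. by rewrite /ell mevalZ mevalXU mulVf. Qed.

Lemma ell_form : is_form 1 ell.
Proof. by apply/is_formP/dhomogZ/is_formP/is_formX. Qed.

Lemma meval_recenter g : (recenter g).@[coord_pt K k] = g.@[q].
Proof.
rewrite /recenter comp_mpoly_meval; apply: meval_eq => i; rewrite tnth_recenter_t /coord_pt.
have [->|ne] := eqVneq i k; first by rewrite mevalZ mevalXU eqxx mulr1.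
by rewrite mevalD mevalZ !mevalXU eqxx (negbTE ne) mulr1 add0r.
Qed.

Lemma recenter_form d g : is_form d g -> is_form d (recenter g).
Proof.
apply: is_form_comp_linear => i; apply/is_formP; rewrite tnth_recenter_t.
by case: eqP => _; [|apply: rpredD]; try apply: dhomogZ; apply/is_formP/is_formX.
Qed.

Lemma recenter_inv_t_vanishing i : i != k -> vanishing_linear q (tnth recenter_inv_t i).
Proof.
move=> ne; rewrite tnth_recenter_inv_t (negbTE ne); split.
  by apply/is_formP; apply: rpredB; try apply: dhomogZ; apply/is_formP/is_formX.
by rewrite mevalB mevalZ !mevalXU -mulrA mulVf // mulr1 subrr.
Qed.

Lemma gen_linprod_recenter_inv d g : ek_order_ge k d g -> gen (linprod q d) (recenter_inv g).
Proof.
move=> g_ord; rewrite /recenter_inv comp_mpolyE; apply: gen_ideal_sum => m g_m.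
apply: gen_idealZ; rewrite (bigD1 k) //=; apply: gen_idealMl.
apply: (@gen_linprod_le _ _ _ (\sum_(i | i != k) m i)%N).
  by have := g_ord m g_m; rewrite (mdeg_split k); lia.
apply: mem_gen_ideal; elim/big_ind2: _ => [|a x b y|i ne]; [exact: linprod0 | exact: linprodM |].
exact/linprodX/recenter_inv_t_vanishing.
Qed.

Lemma ek_order_recenter_vanishing d h :
  is_form d h -> h.@[q] = 0 -> ek_order_ge k 1 (recenter h).
Proof.
move=> /recenter_form /is_formP h_d h_q.
by apply: (ek_order_vanishing_form h_d); rewrite meval_recenter.
Qed.

Lemma gen_linprod1_vanishing d h : is_form d h -> h.@[q] = 0 -> gen (linprod q 1) h.
Proof.
move=> h_d h_q; rewrite -(recenterK h).
exact/gen_linprod_recenter_inv/(ek_order_recenter_vanishing h_d).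
Qed.

Lemma ek_order_recenter d f : gen (linprod q d) f -> ek_order_ge k d (recenter f).
Proof.
move=> [gs [Hgs ->]]; rewrite /recenter raddf_sum.
apply: ek_order_sum => gh /Hgs [vs [<- Hvs ->]] /=.
rewrite rmorphM /=; apply: ek_orderMl; rewrite rmorph_prod /=.
elim: vs Hvs => [|v vs IH] Hvs; first by rewrite big_nil; apply: ek_order_ge0.
rewrite big_cons /= -[(size vs).+1]add1n; apply: ek_orderM.
  by case: (Hvs v (mem_head _ _)) => v_lin v_q; apply: ek_order_recenter_vanishing v_lin v_q.
by apply: IH => w vs_w; apply: Hvs; rewrite inE vs_w orbT.
Qed.

Lemma gen_linprod_cancel_ell d e g : gen (linprod q d) (ell ^+ e * g) -> gen (linprod q d) g.
Proof.
move/ek_order_recenter; rewrite /recenter rmorphM rmorphXn /= -/(recenter ell) recenter_ell.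
by move/ek_order_cancelX/gen_linprod_recenter_inv; rewrite recenterK.
Qed.

Lemma form_ell_pow_mod d e g : is_form e g -> (d <= e.+1)%N ->
  exists phi, gen (linprod q d) (g - ell ^+ (e.+1 - d) * phi).
Proof.
move=> g_e le_de; have /is_formP/dhomogP sg_e := recenter_form g_e.
set c := (e.+1 - d)%N; set sg := recenter g.
pose low (m : 'X_{1..N.+1}) := (d + m k <= mdeg m)%N.
(* the monomials of degree [e] that are not [low] are divisible by [x_k ^+ c] *)
pose phi := \sum_(m <- msupp sg | ~~ low m) sg@_m *: 'X_[m - U_(k) *+ c].
exists (recenter_inv phi).
have sgE : sg = \sum_(m <- msupp sg | low m) sg@_m *: 'X_[m] + 'X_k ^+ c * phi.
  rewrite {1}[sg]mpolyE (bigID low) /=; congr (_ + _).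
  rewrite /phi mulr_sumr big_seq_cond [RHS]big_seq_cond; apply: eq_bigr => m /andP [sg_m not_low].
  rewrite -scalerAr mpolyXn -mpolyXD addmC submK //; apply/mnm_lepP => i.
  rewrite mulmnE mnm1E; have [<-|_] := eqVneq k i; last by rewrite mul0n.
  by move: not_low; rewrite /low sg_e //; lia.
rewrite -{1}(recenterK g) -/sg sgE /recenter_inv comp_mpolyD rmorphM rmorphXn /=.
rewrite comp_mpolyX_tnth tnth_recenter_inv_t eqxx -/ell addrK.
apply: gen_linprod_recenter_inv; rewrite -big_filter; apply: ek_order_sum => m.
by rewrite mem_filter => /andP [m_low _]; apply: ek_orderZ => m'; rewrite msuppX inE => /eqP ->.
Qed.

End Recentering.

Section PointPowers.
Variables (K : closedFieldType) (N : nat).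
Local Notation R := {mpoly K[N.+1]}.
Local Notation gen := (@gen_ideal K N).
Implicit Types (q : coords K N) (f g h : R).

Lemma ideal_pow_linprod q n z : linprod q n z -> ideal_pow (Ipt q) n z.
Proof.
elim: n z => [//|n IH] z; rewrite -addn1 => /linprod_split [x [y [Hx [vs [size_vs Hvs ->]] ->]]].
rewrite addn1; apply: mem_gen_ideal; exists x, (\prod_(v <- vs) v); split; first exact: IH.
split=> //; case: vs size_vs Hvs => [|v [|//]] // _ Hv; rewrite big_seq1.
by apply: mem_gen_ideal; exists 1%N; apply: Hv; rewrite mem_head.
Qed.

Lemma ideal_pow_IptE q n f :
  (exists k, q k != 0) -> ideal_pow (Ipt q) n f <-> gen (linprod q n) f.
Proof.
move=> [k qk]; split; last first.
  by move=> Hf; apply/ideal_pow_gen/(gen_ideal_mono _ Hf) => z; apply: ideal_pow_linprod.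
elim: n f => [|n IH] f /=; first by move=> _; apply: gen_linprod0.
apply: gen_ideal_trans => h [a [b [Ha [Hb ->]]]]; rewrite -addn1; apply: gen_linprodM.
  exact: IH.
by apply: gen_ideal_trans Hb => {}h [t [h_t h_q]]; exact: (gen_linprod1_vanishing qk h_t h_q).
Qed.

Lemma pihomog_mul_form g h t d : is_form t h ->
  pihomog mdeg d (g * h) = if (t <= d)%N then pihomog mdeg (d - t) g * h else 0.
Proof.
move=> /is_formP h_t; set B := (msize g + d.+1)%N.
rewrite {1}(@pihomog_partitionE _ _ mdeg B g) ?leq_addr // mulr_suml raddf_sum /=.
rewrite (eq_bigr (fun e : 'I_B => if (e + t == d)%N then pihomog mdeg e g * h else 0)); last first.
  move=> e _; have gh_e : pihomog mdeg e g * h \is (e + t).-homog.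
    by apply: dhomogM => //; apply: pihomogP.
  by case: eqP => [<-|/eqP ne]; [rewrite pihomog_dE | apply: pihomog_ne0 gh_e].
rewrite -big_mkcond /=; case: leqP => le_td; last by rewrite big_pred0 // => e; apply/eqP; lia.
have lt_B : (d - t < B)%N by rewrite /B; lia.
rewrite (big_pred1 (Ordinal lt_B)) // => e /=; apply/eqP/eqP => [E|E].
  by apply: val_inj => /=; lia.
by rewrite E /=; lia.
Qed.

Lemma gen_ideal_pihomog (S : pset K N) f d : (forall h, S h -> exists t, is_form t h) ->
  gen S f -> gen S (pihomog mdeg d f).
Proof.
move=> S_forms [gs [Hgs ->]]; rewrite raddf_sum; apply: gen_ideal_sum => gh /Hgs S_gh /=.
have [t gh_t] := S_forms _ S_gh; rewrite (pihomog_mul_form _ _ gh_t).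
by case: ifP => _; [apply/gen_idealMl/mem_gen_ideal | apply: gen_ideal0].
Qed.

Lemma gen_linprod_pihomog q n f d : gen (linprod q n) f -> gen (linprod q n) (pihomog mdeg d f).
Proof. by apply: gen_ideal_pihomog => h /linprod_form; exists n. Qed.

Lemma gen_linprod_deg q n f d : gen (linprod q n) f -> is_form d f -> f != 0 -> (n <= d)%N.
Proof.
move=> [gs [Hgs fE]] /is_formP f_d; rewrite leqNgt; apply: contra => lt_dn; apply/eqP.
rewrite -(pihomog_dE f_d) fE raddf_sum big1_seq // => gh /andP [_ /Hgs gh_lin] /=.
by rewrite (pihomog_mul_form _ _ (linprod_form gh_lin)) leqNgt lt_dn.
Qed.

Lemma gen_ideal_form_decomp (S : pset K N) c D f :
  (forall h, S h -> is_form c h) -> (c <= D)%N -> is_form D f -> gen S f ->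
  exists gs : seq (R * R),
    (forall gh, gh \in gs -> is_form (D - c) gh.1 /\ S gh.2) /\ f = \sum_(gh <- gs) gh.1 * gh.2.
Proof.
move=> S_c le_cD /is_formP f_D [gs [Hgs fE]].
exists [seq (pihomog mdeg (D - c) gh.1, gh.2) | gh <- gs]; split.
  by move=> gh /mapP [x /Hgs Sx ->]; split=> //; apply/is_formP/pihomogP.
rewrite big_map -(pihomog_dE f_D) fE raddf_sum; apply: eq_big_seq => gh /Hgs S_gh /=.
by rewrite (pihomog_mul_form _ _ (S_c _ S_gh)) le_cD.
Qed.

End PointPowers.

Section Saturation.
Variables (K : closedFieldType) (N s : nat) (p : 'I_s -> coords K N).
Hypothesis p_nz : forall i, exists k, p i k != 0.
Hypothesis p_distinct : forall i j, i != j -> ~ exists c : K, forall k, p i k = c * p j k.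
Local Notation R := {mpoly K[N.+1]}.
Local Notation gen := (@gen_ideal K N).
Implicit Types (nn : 'I_s -> nat) (l : seq 'I_s) (f z : R).

(* [gen_ideal (prod_linprod nn l)] is [\prod_(i <- l) I(p_i)^(nn i)]. *)
Fixpoint prod_linprod nn l : R -> Prop :=
  match l with
  | [::] => fun z => z = 1
  | i :: l' => fun z =>
      exists c lam, [/\ prod_linprod nn l' c, linprod (p i) (nn i) lam & z = c * lam]
  end.

Lemma prod_linprod_form nn l z : prod_linprod nn l z -> is_form (\sum_(i <- l) nn i) z.
Proof.
elim: l z => [|i l IH] z /=; first by move=> ->; rewrite big_nil; apply/is_formP/dhomog1.
move=> [c [lam [Hc Hlam ->]]]; rewrite big_cons addnC; apply/is_formP/dhomogM; apply/is_formP.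
  exact: IH.
exact: linprod_form Hlam.
Qed.

Lemma gen_prod_linprod_cons nn i l c a :
  gen (prod_linprod nn l) c -> gen (linprod (p i) (nn i)) a ->
  gen (prod_linprod nn (i :: l)) (c * a).
Proof. by apply: gen_idealM => x y Hx Hy; apply: mem_gen_ideal; exists x, y. Qed.

Lemma gen_prod_linprod_head nn i l f :
  gen (prod_linprod nn (i :: l)) f -> gen (linprod (p i) (nn i)) f.
Proof. by apply: gen_ideal_trans => z [c [lam [_ Hlam ->]]]; apply/gen_idealMl/mem_gen_ideal. Qed.

Lemma prod_linprod_gen_linprod nn l z i :
  prod_linprod nn l z -> i \in l -> gen (linprod (p i) (nn i)) z.
Proof.
elim: l z => [//|j l IH] z /= [c [lam [Hc Hlam ->]]]; rewrite inE => /orP [/eqP ->|il].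
  exact/gen_idealMl/mem_gen_ideal.
exact/gen_idealMr/IH.
Qed.

Lemma separating_linear i j : i != j -> exists v, vanishing_linear (p j) v /\ v.@[p i] != 0.
Proof.
move=> ne; have [a pja] := p_nz j.
pose v (b : 'I_N.+1) : R := p j a *: 'X_b - p j b *: 'X_a.
have v_lin b : vanishing_linear (p j) (v b).
  split; last by rewrite /v mevalB !mevalZ !mevalXU mulrC subrr.
  by apply/is_formP; apply: rpredB; apply: dhomogZ; apply/is_formP/is_formX.
have [b vb|v0] := pickP (fun b => (v b).@[p i] != 0); first by exists (v b).
(* otherwise the 2x2 minors of (p i, p j) vanish, so the points coincide *)
case: (p_distinct ne); exists (p i a / p j a) => b.
have := v0 b; rewrite /v mevalB !mevalZ !mevalXU subr_eq0 /= => /eqP E.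
by apply: (mulfI pja); rewrite E; field.
Qed.

Lemma prod_linprod_nonvanishing nn i l :
  i \notin l -> exists c1, prod_linprod nn l c1 /\ c1.@[p i] != 0.
Proof.
elim: l => [|j l IH] /=; first by move=> _; exists 1; rewrite meval1 oner_neq0.
rewrite inE negb_or => /andP [ne /IH [c [Hc c_i]]].
have [v [v_lin v_i]] := separating_linear ne.
exists (c * v ^+ nn j); split; first by exists c, (v ^+ nn j); split=> //; apply: linprodX.
by rewrite mevalM rmorphXn /= mulf_neq0 // expf_neq0.
Qed.

Lemma prod_linprod_reduce nn i l k D f : p i k != 0 ->
  (\sum_(j <- l) nn j <= D)%N -> (nn i <= (D - \sum_(j <- l) nn j).+1)%N ->
  is_form D f -> gen (prod_linprod nn l) f ->
  exists2 Phi, gen (prod_linprod nn l) Phi &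
    gen (prod_linprod nn (i :: l))
      (f - ell (p i) k ^+ ((D - \sum_(j <- l) nn j).+1 - nn i) * Phi).
Proof.
move=> pik le_cD le_n f_D f_l.
have [gs [Hgs ->]] := gen_ideal_form_decomp (@prod_linprod_form nn l) le_cD f_D f_l.
set M := (_ - nn i)%N; elim: gs Hgs => [|gh gs IH] Hgs.
  by exists 0; rewrite ?big_nil ?mulr0 ?subrr; apply: gen_ideal0.
have [Phi Phi_l rem] : exists2 Phi, gen (prod_linprod nn l) Phi &
    gen (prod_linprod nn (i :: l)) (\sum_(x <- gs) x.1 * x.2 - ell (p i) k ^+ M * Phi).
  by apply: IH => x gs_x; apply: Hgs; rewrite inE gs_x orbT.
have [gh1_e gh2_l] := Hgs gh (mem_head _ _).
have [phi phi_rem] := form_ell_pow_mod pik gh1_e le_n.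
exists (phi * gh.2 + Phi); first by apply: gen_idealD => //; apply/gen_idealMl/mem_gen_ideal.
rewrite big_cons.
have -> : gh.1 * gh.2 + \sum_(x <- gs) x.1 * x.2 - ell (p i) k ^+ M * (phi * gh.2 + Phi) =
    (gh.1 - ell (p i) k ^+ M * phi) * gh.2
    + (\sum_(x <- gs) x.1 * x.2 - ell (p i) k ^+ M * Phi) by ring.
apply: gen_idealD => //; rewrite mulrC.
exact/gen_prod_linprod_cons/phi_rem/mem_gen_ideal.
Qed.

Lemma ell_pow_decomp nn i l k M : p i k != 0 -> i \notin l ->
  ((\sum_(j <- l) nn j) * nn i <= M)%N ->
  exists u w, [/\ gen (prod_linprod nn l) u, gen (linprod (p i) (nn i)) w
               & ell (p i) k ^+ M = u + w].
Proof.
move=> pik i_l le_M; set c := (\sum_(j <- l) nn j)%N in le_M; set n := nn i in le_M *.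
set q := p i in pik *; set L := ell q k.
have [c1 [c1_l c1_q]] := prod_linprod_nonvanishing nn i_l; set a := c1.@[q] in c1_q.
set ht := a *: L ^+ c - c1.
have L_c : is_form c (L ^+ c).
  by apply/is_formP; have := dhomogMn c (iffLR (is_formP _ _) (ell_form q k)); rewrite mul1n.
have ht_c : is_form c ht.
  apply/is_formP; apply: rpredB; [apply: dhomogZ|]; apply/is_formP => //.
  exact: prod_linprod_form.
have ht_q : ht.@[q] = 0 by rewrite mevalB mevalZ rmorphXn /= meval_ell // expr1n mulr1 subrr.
have ht_n : gen (linprod q n) (ht ^+ n).
  by have := gen_linprodX n (gen_linprod1_vanishing pik ht_c ht_q); rewrite mul1n.
(* [a L^c = c1 + ht], so [a^n L^(cn) - ht^n] is a multiple of [c1] *)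
set U := \sum_(j < n) (a *: L ^+ c) ^+ (n.-1 - j) * ht ^+ j.
have LE : a ^+ n *: L ^+ (c * n) = c1 * U + ht ^+ n.
  have diffE : (a *: L ^+ c) ^+ n - ht ^+ n = c1 * U by rewrite subrXX /ht opprB addrC subrK.
  by rewrite exprM -exprZn -diffE subrK.
exists (a ^- n *: (L ^+ (M - c * n) * (c1 * U))), (a ^- n *: (L ^+ (M - c * n) * ht ^+ n)).
split; [exact/gen_idealZ/gen_idealMl/gen_idealMr/mem_gen_ideal | exact/gen_idealZ/gen_idealMl |].
rewrite -scalerDr -mulrDr -LE -scalerAr scalerA mulVf ?expf_neq0 // scale1r -exprD subnK //.
Qed.

Lemma gen_prod_linprod_cons_deg nn i l D f : i \notin l ->
  (\sum_(j <- l) nn j + nn i + (\sum_(j <- l) nn j) * nn i <= D)%N -> is_form D f ->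
  gen (prod_linprod nn l) f -> gen (linprod (p i) (nn i)) f -> gen (prod_linprod nn (i :: l)) f.
Proof.
move=> i_l le_D f_D f_l f_i; have [k pik] := p_nz i.
set c := (\sum_(j <- l) nn j)%N in le_D; set n := nn i in le_D f_i.
have le_cD : (c <= D)%N by lia.
have le_n : (n <= (D - c).+1)%N by lia.
have [Phi Phi_l rem] := prod_linprod_reduce pik le_cD le_n f_D f_l.
set M := ((D - c).+1 - n)%N in rem; set L := ell (p i) k in rem.
(* [f = rem + L^M Phi] with [Phi] in both ideals, and [L^M] lies in their sum *)
have Phi_i : gen (linprod (p i) n) Phi.
  apply: (gen_linprod_cancel_ell pik (e := M)).
  have -> : L ^+ M * Phi = f - (f - L ^+ M * Phi) by rewrite opprB addrC subrK.
  exact/gen_idealB/(gen_prod_linprod_head rem).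
have le_M : (c * n <= M)%N by rewrite /M; lia.
have [u [w [u_l w_i LE]]] := ell_pow_decomp pik i_l le_M.
have -> : f = (f - L ^+ M * Phi) + (u * Phi + Phi * w) by rewrite [Phi * w]mulrC -mulrDl -LE subrK.
by apply: gen_idealD => //; apply: gen_idealD; apply: gen_prod_linprod_cons.
Qed.

Lemma prod_linprod_saturated nn l : uniq l -> exists T, forall D f, (T <= D)%N -> is_form D f ->
  (forall i, i \in l -> gen (linprod (p i) (nn i)) f) -> gen (prod_linprod nn l) f.
Proof.
elim: l => [|i l IH] /=.
  by move=> _; exists 0%N => D f _ _ _; rewrite -[f]mulr1; apply/gen_idealMl/mem_gen_ideal.
move=> /andP [i_l /IH [T HT]].
exists (maxn T (\sum_(j <- l) nn j + nn i + (\sum_(j <- l) nn j) * nn i)) => D f.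
rewrite geq_max => /andP [le_TD le_D] f_D f_pts; apply: (gen_prod_linprod_cons_deg i_l le_D f_D).
  by apply: (HT D f le_TD f_D) => j l_j; apply: f_pts; rewrite inE l_j orbT.
by apply: f_pts; rewrite mem_head.
Qed.

Lemma prod_linprod_blocks nn r l z : prod_linprod (fun i => r * nn i)%N l z ->
  exists zs : seq R,
    [/\ size zs = r, forall y, y \in zs -> prod_linprod nn l y & z = \prod_(y <- zs) y].
Proof.
elim: l z => [|i l IH] z /=.
  move=> ->; exists (nseq r 1); split; [by rewrite size_nseq | by move=> y /nseqP [->] |].
  by rewrite big1_seq // => y /andP [_ /nseqP [->]].
move=> [c [lam [/IH [zs [size_zs Hzs ->]] /linprod_blocks [ls [size_ls Hls ->]] ->]]].
have [zsE lsE] : unzip1 (zip zs ls) = zs /\ unzip2 (zip zs ls) = ls.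
  by rewrite unzip1_zip ?unzip2_zip ?size_zs ?size_ls.
exists [seq x.1 * x.2 | x <- zip zs ls]; split.
- by rewrite size_map size_zip size_zs size_ls minnn.
- move=> y /mapP [x x_zip ->]; exists x.1, x.2; split=> //.
    by apply: Hzs; rewrite -zsE; apply: map_f.
  by apply: Hls; rewrite -lsE; apply: map_f.
- rewrite big_map big_split /=; congr (_ * _).
    by rewrite -[in LHS]zsE big_map.
  by rewrite -[in LHS]lsE big_map.
Qed.

Variable mult : 'I_s -> nat.

Lemma symb_powE m f : symb_pow p mult m f <-> forall i, gen (linprod (p i) (m * mult i)) f.
Proof. by split=> Hf i; apply/(ideal_pow_IptE _ _ (p_nz i))/Hf. Qed.

Lemma ideal_pow_IZ_linprod r f i : ideal_pow (IZ p mult) r f -> gen (linprod (p i) (r * mult i)) f.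
Proof.
elim: r f => [|r IH] f /=; first by move=> _; apply: gen_linprod0.
apply: gen_ideal_trans => h [a [b [Ha [Hb ->]]]]; rewrite mulSnr.
by apply: gen_linprodM; [apply: IH | apply/(ideal_pow_IptE _ _ (p_nz i))/Hb].
Qed.

Lemma prod_linprod_IZ y : prod_linprod mult (enum 'I_s) y -> IZ p mult y.
Proof.
move=> Hy i; apply/(ideal_pow_IptE _ _ (p_nz i)).
by apply: prod_linprod_gen_linprod Hy _; rewrite mem_enum.
Qed.

Lemma ideal_pow_IZ_saturates r : exists T, forall j, (T <= j)%N ->
  same_comp (ideal_pow (IZ p mult) r) (symb_pow p mult r) j.
Proof.
have [T HT] := prod_linprod_saturated (fun i => r * mult i)%N (enum_uniq 'I_s).
exists T => j le_Tj f f_j; split=> [Hf i|/symb_powE Hf].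
  exact/(ideal_pow_IptE _ _ (p_nz i))/ideal_pow_IZ_linprod.
apply/ideal_pow_gen/(gen_ideal_mono _ (HT j f le_Tj f_j (fun i _ => Hf i))).
by move=> z /prod_linprod_blocks [zs [<- Hzs ->]]; apply: ideal_pow_prod => y /Hzs /prod_linprod_IZ.
Qed.

End Saturation.

Section LeastDegree.
Variables (K : closedFieldType) (N : nat).

Lemma decP_true (P : Prop) : Defs.decP P = true <-> P.
Proof. by rewrite /Defs.decP; case: excluded_middle_informative. Qed.

Lemma alpha_spec (J : pset K N) : (exists t, comp_nonzero J t) ->
  comp_nonzero J (alpha J) /\ forall t, comp_nonzero J t -> (alpha J <= t)%N.
Proof.
move=> exJ; rewrite /alpha; case: excluded_middle_informative => [exJ'|//].
by case: ex_minnP => a /decP_true Ja a_min; split=> // t /decP_true /a_min.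
Qed.

Lemma satdeg_spec s (p : 'I_s -> coords K N) (mult : 'I_s -> nat) r :
  (exists t, forall j, (t <= j)%N -> same_comp (ideal_pow (IZ p mult) r) (symb_pow p mult r) j) ->
  forall j, (satdeg p mult r <= j)%N -> same_comp (ideal_pow (IZ p mult) r) (symb_pow p mult r) j.
Proof.
move=> ex_t; rewrite /satdeg; case: excluded_middle_informative => [ex_t'|//].
by case: ex_minnP => a /decP_true.
Qed.

End LeastDegree.

Section RealBounds.
Local Open Scope R_scope.

Lemma Glb_Rbar_ge1 (E : R -> Prop) x0 :
  E x0 -> (forall x, E x -> 1 <= x) -> 1 <= real (Glb_Rbar E) <= x0.
Proof.
move=> Ex0 E_ge1; have [glb_lb glb_glb] := Glb_Rbar_correct E.
have : Rbar_le 1 (Glb_Rbar E) by apply: glb_glb => x /E_ge1.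
have : Rbar_le (Glb_Rbar E) x0 by apply: glb_lb.
by case: (Glb_Rbar E).
Qed.

Lemma Rle_of_div_le x y a m : 0 < m -> 1 <= a -> a <= y / m -> x / a <= m -> x <= y.
Proof.
move=> m_gt0 a_ge1 a_le x_le.
have a_neq0 : a <> 0 by apply: Rgt_not_eq; lra.
have m_neq0 : m <> 0 by apply: Rgt_not_eq.
apply: (Rle_trans _ (x / a * a)).
  by rewrite /Rdiv Rmult_assoc Rinv_l // Rmult_1_r; apply: Rle_refl.
apply: (Rle_trans _ (m * a)); first by apply: Rmult_le_compat_r; lra.
apply: (Rle_trans _ (m * (y / m))); first by apply: Rmult_le_compat_l; lra.
by rewrite Rmult_comm /Rdiv Rmult_assoc Rinv_l // Rmult_1_r; apply: Rle_refl.
Qed.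

End RealBounds.

Section SymbolicPowers.
Variables (K : closedFieldType) (N s : nat) (p : 'I_s -> coords K N) (mult : 'I_s -> nat).
Hypothesis p_nz : forall i, exists k, p i k != 0.
Local Notation Isymb m := (symb_pow p mult m).

Lemma symb_pow_pihomog m f d : Isymb m f -> Isymb m (pihomog mdeg d f).
Proof.
move/(symb_powE p_nz mult _ _) => Hf; apply/(symb_powE p_nz mult _ _) => i.
exact: gen_linprod_pihomog.
Qed.

Lemma symb_pow_mono r m f : (r <= m)%N -> Isymb m f -> Isymb r f.
Proof.
move=> le_rm /(symb_powE p_nz mult _ _) Hf; apply/(symb_powE p_nz mult _ _) => i.
by apply: gen_linprod_le (Hf i); rewrite leq_mul2r le_rm orbT.
Qed.

Lemma symb_powX m e f : Isymb m f -> Isymb (m * e) (f ^+ e).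
Proof.
move/(symb_powE p_nz mult _ _) => Hf; apply/(symb_powE p_nz mult _ _) => i.
by rewrite mulnAC; apply: gen_linprodX.
Qed.

Lemma comp_nonzero_symb_pow m m' t :
  (0 < m)%N -> comp_nonzero (Isymb m) t -> comp_nonzero (Isymb m') (t * m').
Proof.
move=> m_gt0 [F [F_m [F_t F_nz]]]; exists (F ^+ m'); split; last split.
- by apply: symb_pow_mono (symb_powX m' F_m); rewrite leq_pmull.
- by apply/is_formP/dhomogMn/is_formP.
- by rewrite expf_neq0.
Qed.

Lemma alpha_symb_pow_ge m : (exists i, mult i != 0) ->
  (exists t, comp_nonzero (Isymb m) t) -> (m <= alpha (Isymb m))%N.
Proof.
move=> [i0 mult_i0] /alpha_spec [[G [G_m [G_form G_nz]]] _].
apply: leq_trans (gen_linprod_deg ((symb_powE p_nz mult m G).1 G_m i0) G_form G_nz).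
by rewrite leq_pmulr // lt0n.
Qed.

Lemma alphahat_bounds m d :
  (exists i, mult i != 0) -> (0 < m)%N -> comp_nonzero (Isymb m) d ->
  Rle 1 (alphahat p mult) /\ Rle (alphahat p mult) (Rdiv (INR (alpha (Isymb m))) (INR m)).
Proof.
move=> mult_nz m_gt0 d_m; apply: Glb_Rbar_ge1; first by exists m.
move=> _ [m' [m'_gt0 ->]].
have d_m' := comp_nonzero_symb_pow m' m_gt0 d_m.
have /leP/le_INR le_m' := alpha_symb_pow_ge mult_nz (ex_intro _ _ d_m').
have m'_pos : Rlt 0 (INR m') by apply/lt_0_INR/ltP.
apply: (Rmult_le_reg_r (INR m')) => //.
by rewrite Rmult_1_l /Rdiv Rmult_assoc Rinv_l ?Rmult_1_r //; lra.
Qed.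

Lemma satdeg_le_alpha m r d :
  (exists i, mult i != 0) -> (0 < m)%N -> comp_nonzero (Isymb m) d ->
  Rle (Rmax (Rdiv (INR (satdeg p mult r)) (alphahat p mult)) (INR r)) (INR m) ->
  (satdeg p mult r <= alpha (Isymb m))%N /\ (r <= m)%N.
Proof.
move=> mult_nz m_gt0 d_m le_max; have [ah_ge1 ah_le] := alphahat_bounds mult_nz m_gt0 d_m.
split; apply/leP/INR_le; last exact: Rle_trans (Rmax_r _ _) le_max.
apply: (Rle_of_div_le _ ah_ge1 ah_le (Rle_trans _ _ _ (Rmax_l _ _) le_max)).
exact/lt_0_INR/ltP.
Qed.

End SymbolicPowers.

Theorem proposition3p2 (K : closedFieldType) (N s : nat)
  (p : 'I_s -> coords K N) (mult : 'I_s -> nat) (m r : nat) :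
  (forall i, exists k, p i k != 0%R) ->
  (forall i j, i != j -> ~ exists c : K, forall k, p i k = (c * p j k)%R) ->
  (exists i, mult i != 0%N) ->
  (0 < m)%N -> (0 < r)%N ->
  Rle (Rmax (Rdiv (INR (satdeg p mult r)) (alphahat p mult)) (INR r)) (INR m) ->
  forall f, symb_pow p mult m f -> ideal_pow (IZ p mult) r f.
Proof.
move=> p_nz p_distinct mult_nz m_gt0 _ le_max f f_m.
rewrite (@pihomog_partitionE _ _ mdeg _ f (leqnn _)); apply: ideal_pow_sum => d _.
set fd := pihomog mdeg d f; have [->|fd_nz] := eqVneq fd 0; first exact: ideal_pow0.
have fd_d : is_form d fd by apply/is_formP/pihomogP.
have fd_m : symb_pow p mult m fd by apply: symb_pow_pihomog.
have d_m : comp_nonzero (symb_pow p mult m) d by exists fd.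
have [le_sd le_rm] := satdeg_le_alpha p_nz mult_nz m_gt0 d_m le_max.
have [_ alpha_min] := alpha_spec (ex_intro _ _ d_m).
have sat := satdeg_spec (ideal_pow_IZ_saturates p_nz p_distinct mult r).
by apply/(sat d (leq_trans le_sd (alpha_min d d_m)) fd fd_d)/(symb_pow_mono p_nz le_rm fd_m).
Qed.
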